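(* There exists a finite planar graph $G$ such that the vertices of $G$ cannot be non-repetitively coloured using fewer than seven colours; that is, every non-repetitive vertex colouring of $G$ uses at least seven colours.
   Context: A finite sequence $a_1a_2\cdots a_n$ is called non-repetitive if it contains no two identical adjacent blocks, i.e. there are no $i$ and $m\ge 1$ with $i+2m-1\le n$ and $a_{i+j}=a_{i+m+j}$ for all $0\le j<m$. A vertex colouring of a graph $G$ is called non-repetitive if for every path $v_1v_2\cdots v_n$ in $G$ with distinct vertices, the sequence of colours of $v_1,\dots,v_n$ is non-repetitive. *)

From mathcomp Require Import all_boot.
From Stdlib Require Import Reals.
Set Implicit Arguments. Unset Strict Implicit. Unset Printing Implicit Defensive.

Definition nonrepetitive (s : seq nat) : Prop :=
  ~ exists i m : nat, 1 <= m /\ i + 2 * m <= size s /\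
      forall j, j < m -> nth 0 s (i + j) = nth 0 s (i + m + j).

Definition graph_path (n : nat) (e : rel 'I_n) (p : seq 'I_n) : Prop :=
  uniq p /\ (match p with [::] => true | x :: q => path e x q end).

Definition nonrep_colouring (n : nat) (e : rel 'I_n) (c : 'I_n -> nat) : Prop :=
  forall p, graph_path e p -> nonrepetitive (map c p).

Definition num_colours (n : nat) (c : 'I_n -> nat) : nat :=
  size (undup (map c (enum 'I_n))).

Definition simple_graph (n : nat) (e : rel 'I_n) : Prop :=
  symmetric e /\ irreflexive e.

Definition point : Type := (R * R)%type.

Definition pdist (a b : point) : R :=
  sqrt ((fst a - fst b)^2 + (snd a - snd b)^2)%R.

Definition cont01 (g : R -> point) : Prop :=
  forall t, (0 <= t <= 1)%R -> forall eps, (0 < eps)%R ->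
    exists delta, (0 < delta)%R /\
      forall s, (0 <= s <= 1)%R -> (Rabs (s - t) < delta)%R ->
        (pdist (g s) (g t) < eps)%R.

Definition inj01 (g : R -> point) : Prop :=
  forall s t, (0 <= s <= 1)%R -> (0 <= t <= 1)%R -> g s = g t -> s = t.

Definition planar (n : nat) (e : rel 'I_n) : Prop :=
  exists (pos : 'I_n -> point) (arc : 'I_n -> 'I_n -> R -> point),
    injective pos /\
    (forall u v, e u v ->
       cont01 (arc u v) /\ inj01 (arc u v) /\
       arc u v 0%R = pos u /\ arc u v 1%R = pos v /\
       (forall t w, (0 < t < 1)%R -> arc u v t <> pos w)) /\
    (forall u v u' v', e u v -> e u' v' ->
       ~ ((u = u' /\ v = v') \/ (u = v' /\ v = u')) ->
       forall t t', (0 < t < 1)%R -> (0 < t' < 1)%R ->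
         arc u v t <> arc u' v' t').

(* It is planar because the straight-line drawing at
   the integer points [coords] is an embedding: no edge passes through a third
   vertex, and of any two distinct edges one lies weakly on one side of the line
   through the other, touching it at most at an endpoint; all of this is decided
   by integer orientation tests.
   For the colouring bound, rename the colours of a non-repetitive colouring in
   order of first appearance along the vertices 0, 1, ..., 10.  With at most six
   colours this gives a restricted-growth string over {0, ..., 5}, and an
   exhaustive search over such strings shows that each of them colours some path
   on 2 or 4 vertices as x x or x y x y. *)

From HB Require Import structures.
From Stdlib Require Import Reals Lra ZArith.
From mathcomp Require Import all_boot.
Set Implicit Arguments. Unset Strict Implicit. Unset Printing Implicit Defensive.

HB.instance Definition _ := hasDecEq.Build Z Z.eqb_spec.

Definition square (T : eqType) (s : seq T) : bool :=
  let m := (size s)./2 in [&& 0 < m, size s == m + m & take m s == drop m s].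

Lemma square_map (T T' : eqType) (g : T -> T') (s : seq T) :
  square s -> square (map g s).
Proof.
rewrite /square /= size_map -map_take -map_drop.
by case/and3P=> -> -> /eqP->; rewrite eqxx.
Qed.

Lemma square_not_nonrepetitive (s : seq nat) : square s -> ~ nonrepetitive s.
Proof.
case/and3P=> m_gt0 /eqP size_s /eqP take_drop; apply.
set m := (size s)./2 in m_gt0 size_s take_drop *.
exists 0, m; split=> //; split=> [|j lt_jm]; first by rewrite size_s addnn -mul2n.
have := congr1 (nth 0 ^~ j) take_drop.
by rewrite nth_take // nth_drop add0n.
Qed.

Lemma nonrep_colouring_square_free n (e : rel 'I_n) c p :
  nonrep_colouring e c -> graph_path e p -> ~~ square (map c p).
Proof.
by move=> nonrep_c path_p; apply/negP=> /square_not_nonrepetitive; apply; apply: nonrep_c.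
Qed.

Section Extend.

Variable T : eqType.
Implicit Types (s : seq T) (x : T).

Definition extend s x : seq T := if x \in s then s else rcons s x.

Lemma extend_uniq s x : uniq s -> uniq (extend s x).
Proof. by rewrite /extend; case: ifP => // /negbT x_s; rewrite rcons_uniq x_s. Qed.

Lemma mem_extend s x : x \in extend s x.
Proof. by rewrite /extend; case: ifP => // _; rewrite mem_rcons mem_head. Qed.

Lemma subset_extend s x (A : {pred T}) :
  {subset s <= A} -> x \in A -> {subset extend s x <= A}.
Proof.
rewrite /extend => s_A x_A y; case: ifP => _; first exact: s_A.
by rewrite mem_rcons in_cons => /predU1P[-> | /s_A].
Qed.

Lemma index_extend s x : index x (extend s x) = index x s.
Proof.
rewrite /extend; case: ifP => // /negbT x_s.
by rewrite -cats1 index_cat (negbTE x_s) /= eqxx addn0 memNindex.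
Qed.

Lemma nth_extend x0 s x j : j < size s -> nth x0 (extend s x) j = nth x0 s j.
Proof. by rewrite /extend; case: ifP => // _ lt_j; rewrite nth_rcons lt_j. Qed.

Lemma size_extend s x : size (extend s x) = maxn (size s) (index x s).+1.
Proof.
rewrite /extend; case: ifP => [x_s | /negbT x_s].
  by apply/esym/maxn_idPl; rewrite index_mem.
by rewrite size_rcons memNindex //; apply/esym/maxn_idPr.
Qed.

End Extend.

Section CanonicalSearch.

Variables (k : nat) (cands : seq (seq nat)).

Definition repeats_on (lab p : seq nat) : bool :=
  all (fun i => i < size lab) p && square (map (nth 0 lab) p).

(* [search fuel d lab] holds when every extension of the restricted-growth
   string [lab], which uses the labels [0 .. d-1], by [fuel] more labels below [k]
   makes some candidate path a square; running out of fuel counts as failure. *)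
Fixpoint search (fuel d : nat) (lab : seq nat) : bool :=
  if fuel is fuel'.+1 then
    all (fun col => let lab' := rcons lab col in
           if has (repeats_on lab') cands then true
           else search fuel' (maxn d col.+1) lab')
      (iota 0 (minn d.+1 k))
  else false.

Variables (f : nat -> nat) (palette : seq nat).
Hypothesis f_palette : forall i, f i \in palette.
Hypothesis small_palette : size (undup palette) <= k.
Hypothesis cands_square_free : forall p, p \in cands -> ~~ square (map f p).

(* [lab] lists the colours [f 0], [f 1], ... renamed by their positions in [st]. *)
Definition encodes (st lab : seq nat) : Prop :=
  [/\ uniq st, {subset st <= palette} &
      forall i, i < size lab -> nth 0 lab i < size st /\ f i = nth 0 st (nth 0 lab i)].

Lemma size_encoding st : uniq st -> {subset st <= palette} -> size st <= k.
Proof.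
move=> uniq_st st_palette; apply: leq_trans small_palette.
by apply: uniq_leq_size => // x /st_palette; rewrite mem_undup.
Qed.

Lemma encodes_rcons st lab (x := f (size lab)) :
  encodes st lab -> encodes (extend st x) (rcons lab (index x st)).
Proof.
case=> uniq_st st_palette enc; split.
- exact: extend_uniq.
- exact: subset_extend st_palette (f_palette _).
move=> i; rewrite size_rcons ltnS leq_eqVlt nth_rcons => /predU1P[-> | lt_i].
  by rewrite ltnn eqxx -index_extend index_mem nth_index ?mem_extend.
have [lt_lab ->] := enc i lt_i; rewrite lt_i nth_extend //.
by split=> //; rewrite size_extend leq_max lt_lab.
Qed.

Lemma encodes_square_free st lab p :
  encodes st lab -> p \in cands -> ~~ repeats_on lab p.
Proof.
case=> _ _ enc p_cands; apply/negP=> /andP[/allP labelled sq].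
suff f_p : map f p = map (nth 0 st) (map (nth 0 lab) p).
  by have := square_map (nth 0 st) sq; rewrite -f_p; apply/negP/cands_square_free.
rewrite -map_comp; apply/eq_in_map=> i /labelled /enc[_ ->] //.
Qed.

Lemma search_encoded_false fuel st lab : encodes st lab -> ~~ search fuel (size st) lab.
Proof.
elim: fuel st lab => [//|fuel IH] st lab enc /=.
set x := f (size lab); have enc' : encodes (extend st x) (rcons lab (index x st)).
  exact: encodes_rcons.
apply/allPn; exists (index x st).
  have [uniq_st' st'_palette _] := enc'.
  rewrite mem_iota leq_min ltnS index_size /= -index_extend.
  by apply: leq_trans (size_encoding uniq_st' st'_palette); rewrite index_mem mem_extend.
have -> : has (repeats_on (rcons lab (index x st))) cands = false.
  by apply/hasPn => p; apply: encodes_square_free enc'.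
by rewrite -size_extend; apply: IH.
Qed.

Lemma search_empty_false fuel : ~~ search fuel 0 [::].
Proof. by apply: (@search_encoded_false fuel [::] [::]); split. Qed.

End CanonicalSearch.

Lemma nonrep_colouring_search_bound n (e : rel 'I_n.+1) (cands : seq (seq nat)) k :
  {in cands, forall p, graph_path e (map inord p)} ->
  search k cands n.+1 0 [::] ->
  forall c, nonrep_colouring e c -> k < num_colours c.
Proof.
move=> cands_paths search_ok c nonrep_c; rewrite ltnNge; apply/negP=> few_colours.
apply/negP: search_ok.
apply: (search_empty_false (f := c \o inord) (palette := map c (enum 'I_n.+1))).
- by move=> i; apply: map_f; rewrite mem_enum.
- exact: few_colours.
move=> p /cands_paths path_p; rewrite map_comp.
exact: nonrep_colouring_square_free path_p.
Qed.

Section PlaneGeometry.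
Local Open Scope R_scope.

Definition seg (a b : point) (t : R) : point :=
  (a.1 + t * (b.1 - a.1), a.2 + t * (b.2 - a.2)).

Definition cross (a b c : point) : R :=
  (b.1 - a.1) * (c.2 - a.2) - (b.2 - a.2) * (c.1 - a.1).

Lemma seg0 a b : seg a b 0 = a.
Proof. by case: a => a1 a2; rewrite /seg /=; f_equal; ring. Qed.

Lemma seg1 a b : seg a b 1 = b.
Proof. by case: a b => a1 a2 [b1 b2]; rewrite /seg /=; f_equal; ring. Qed.

Lemma seg_inj a b s t : a <> b -> seg a b s = seg a b t -> s = t.
Proof.
case: a b => a1 a2 [b1 b2] neq_ab [/= eq1 eq2].
have [// | neq_st] := Req_dec s t; case: neq_ab.
have neq_st0 : s - t <> 0 by lra.
by f_equal; apply: (Rmult_eq_reg_l (s - t)) => //; nra.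
Qed.

Lemma pdist_seg a b s t : pdist (seg a b s) (seg a b t) = Rabs (s - t) * pdist a b.
Proof.
rewrite /pdist /seg /= -sqrt_Rsqr_abs -sqrt_mult_alt; last exact: Rle_0_sqr.
by congr sqrt; rewrite /Rsqr; ring.
Qed.

Lemma cont01_seg a b : cont01 (seg a b).
Proof.
move=> t _ eps eps_gt0; have d_ge0 : 0 <= pdist a b by apply: sqrt_pos.
have d1_gt0 : 0 < pdist a b + 1 by lra.
exists (eps / (pdist a b + 1)); split=> [|s _ near_st].
  exact: Rdiv_lt_0_compat.
have := Rmult_lt_compat_r _ _ _ d1_gt0 near_st.
rewrite pdist_seg /Rdiv Rmult_assoc Rinv_l ?Rmult_1_r; last lra.
by have := Rabs_pos (s - t); nra.
Qed.

Lemma cross_seg a b t : cross a b (seg a b t) = 0.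
Proof. by rewrite /cross /seg /=; ring. Qed.

Lemma cross_seg_convex a b c d t :
  cross a b (seg c d t) = (1 - t) * cross a b c + t * cross a b d.
Proof. by rewrite /cross /seg /=; ring. Qed.

Lemma convex_comb_neq0 x y t :
  0 <= x * y -> 0 < x * x + y * y -> 0 < t < 1 -> (1 - t) * x + t * y <> 0.
Proof.
move=> xy_ge0 sq_gt0 t01 comb0.
(* Multiplied by [x] or by [y], the combination is a sum of nonnegative terms. *)
have xx_ge0 : 0 <= (1 - t) * (x * x) by apply: Rmult_le_pos; [lra | apply: Rle_0_sqr].
have yy_ge0 : 0 <= t * (y * y) by apply: Rmult_le_pos; [lra | apply: Rle_0_sqr].
have xy1_ge0 : 0 <= (1 - t) * (x * y) by apply: Rmult_le_pos; lra.
have xy2_ge0 : 0 <= t * (x * y) by apply: Rmult_le_pos; lra.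
have ex : x * ((1 - t) * x + t * y) = (1 - t) * (x * x) + t * (x * y) by ring.
have ey : y * ((1 - t) * x + t * y) = (1 - t) * (x * y) + t * (y * y) by ring.
rewrite comb0 Rmult_0_r in ex ey.
have xx0 : x * x = 0 by apply: (Rmult_eq_reg_l (1 - t)); lra.
have yy0 : y * y = 0 by apply: (Rmult_eq_reg_l t); lra.
lra.
Qed.

Definition of_Z2 (p : Z * Z) : point := (IZR p.1, IZR p.2).

Definition crossZ (a b c : Z * Z) : Z :=
  ((b.1 - a.1) * (c.2 - a.2) - (b.2 - a.2) * (c.1 - a.1))%Z.

(* The open segment [c d] misses the line [a b]: [c] and [d] lie weakly on the
   same side of it and not both on it. *)
Definition off_line (a b c d : Z * Z) : bool :=
  let x := crossZ a b c in let y := crossZ a b d in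
  (0 <=? x * y)%Z && (0 <? x * x + y * y)%Z.

Lemma of_Z2_inj : injective of_Z2.
Proof. by case=> [a1 a2] [b1 b2] [/eq_IZR -> /eq_IZR ->]. Qed.

Lemma cross_of_Z2 a b c : cross (of_Z2 a) (of_Z2 b) (of_Z2 c) = IZR (crossZ a b c).
Proof. by rewrite /crossZ minus_IZR !mult_IZR !minus_IZR. Qed.

Lemma seg_off_line a b c d (t t' : R) : off_line a b c d -> 0 < t' < 1 ->
  seg (of_Z2 a) (of_Z2 b) t <> seg (of_Z2 c) (of_Z2 d) t'.
Proof.
case/andP=> /Z.leb_le/IZR_le + /Z.ltb_lt/IZR_lt + t'01 eq_seg.
rewrite plus_IZR !mult_IZR => xy_ge0 sq_gt0.
have := cross_seg (of_Z2 a) (of_Z2 b) t.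
by rewrite eq_seg cross_seg_convex !cross_of_Z2; apply: convex_comb_neq0 t'01.
Qed.

Section StraightLineDrawing.

Variables (n : nat) (e : rel 'I_n) (pz : 'I_n -> Z * Z).
Hypothesis e_irr : irreflexive e.
Hypothesis pz_inj : injective pz.
Hypothesis edges_avoid_vertices : forall u v w, e u v ->
  [|| w == u, w == v | crossZ (pz u) (pz v) (pz w) != 0%Z].
Hypothesis edges_separated : forall u v u' v', e u v -> e u' v' ->
  [|| (u == u') && (v == v'), (u == v') && (v == u'),
      off_line (pz u) (pz v) (pz u') (pz v') | off_line (pz u') (pz v') (pz u) (pz v)].

Let pos (u : 'I_n) : point := of_Z2 (pz u).

Lemma pos_inj : injective pos.
Proof. by move=> u v /of_Z2_inj /pz_inj. Qed.

Lemma edge_ends_neq u v : e u v -> pos u <> pos v.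
Proof. by move=> e_uv /pos_inj eq_uv; move: e_uv; rewrite eq_uv e_irr. Qed.

Lemma edge_avoids_vertices u v w (t : R) :
  e u v -> 0 < t < 1 -> seg (pos u) (pos v) t <> pos w.
Proof.
move=> e_uv t01; have neq_uv := edge_ends_neq e_uv.
case/or3P: (edges_avoid_vertices w e_uv) => [/eqP-> | /eqP-> | cross_neq0].
- by rewrite -{2}(seg0 (pos u) (pos v)) => /(seg_inj neq_uv); lra.
- by rewrite -{2}(seg1 (pos u) (pos v)) => /(seg_inj neq_uv); lra.
move=> on_w; have := cross_seg (pos u) (pos v) t.
by rewrite on_w cross_of_Z2 => /eq_IZR_R0 cross0; rewrite cross0 in cross_neq0.
Qed.

Lemma edges_disjoint u v u' v' t t' : e u v -> e u' v' ->
  ~ ((u = u' /\ v = v') \/ (u = v' /\ v = u')) -> 0 < t < 1 -> 0 < t' < 1 ->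
  seg (pos u) (pos v) t <> seg (pos u') (pos v') t'.
Proof.
move=> e_uv e_u'v' other_edge t01 t'01.
case/or4P: (edges_separated e_uv e_u'v') => [/andP[/eqP ? /eqP ?] | /andP[/eqP ? /eqP ?] | |].
- by case: other_edge; left.
- by case: other_edge; right.
- by move/seg_off_line; apply.
by move/seg_off_line => off_uv /esym; apply: off_uv.
Qed.

Lemma straight_line_planar : planar e.
Proof.
exists pos, (fun u v => seg (pos u) (pos v)); split; first exact: pos_inj.
split=> [u v e_uv | u v u' v' e_uv e_u'v' other_edge t t' t01 t'01].
  split; first exact: cont01_seg.
  split; first by move=> s t _ _; apply: seg_inj (edge_ends_neq e_uv).
  by rewrite seg0 seg1; split=> //; split=> // t w; apply: edge_avoids_vertices.
exact: edges_disjoint.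
Qed.

End StraightLineDrawing.

End PlaneGeometry.

(* The checks below run on [nat] vertices: [enum 'I_n] is stuck under [vm_compute],
   since [insub] goes through the opaque [idP]. *)
Lemma forall_ord_iota n (P : pred nat) : all P (iota 0 n) -> forall u : 'I_n, P u.
Proof. by move=> /allP P_all u; apply: P_all; rewrite mem_iota add0n ltn_ord. Qed.

Section NatGraph.

Variables (n : nat) (adj : rel nat).

Definition ord_rel : rel 'I_n.+1 := fun u v => adj u v.

Definition is_pathb (p : seq nat) : bool :=
  [&& uniq p, all (fun i => i < n.+1) p & if p is x :: q then path adj x q else true].

Fixpoint seqs_of_size k : seq (seq nat) :=
  if k is k'.+1 then [seq x :: s | x <- iota 0 n.+1, s <- seqs_of_size k'] else [:: [::]].

Definition paths_of_size k : seq (seq nat) := [seq p <- seqs_of_size k | is_pathb p].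

Lemma graph_path_inord p : is_pathb p -> graph_path ord_rel (map inord p).
Proof.
case/and3P=> uniq_p bounded path_p; split.
  rewrite map_inj_in_uniq // => i j /(allP bounded) i_lt /(allP bounded) j_lt.
  by move/(congr1 val); rewrite /= !inordK.
case: p bounded path_p {uniq_p} => //= x q /andP[].
elim: q x => //= y q IH x x_lt /andP[y_lt q_lt] /andP[adj_xy path_q].
by rewrite {1}/ord_rel !inordK // adj_xy IH.
Qed.

Lemma mem_paths_of_size k p : p \in paths_of_size k -> graph_path ord_rel (map inord p).
Proof. by rewrite mem_filter => /andP[/graph_path_inord]. Qed.

End NatGraph.

Definition edges : seq (nat * nat) :=
  [:: (0,1); (0,2); (0,3); (0,4); (0,5); (0,6); (0,8); (1,2); (1,3);
      (1,10); (2,3); (2,4); (2,5); (2,10); (3,4); (3,8); (3,10); (4,5);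
      (4,6); (4,7); (4,8); (5,6); (5,7); (5,9); (6,7); (6,9); (7,9)].

Definition adj (u v : nat) : bool := ((u, v) \in edges) || ((v, u) \in edges).

Definition E : rel 'I_11 := ord_rel adj.

Definition coords : seq (Z * Z) :=
  [:: (0,0); (5832,0); (0,5832); (2916,1944);
      (972,2592); (486,3240); (540,2304); (747,2604);
      (1782,1836); (591,2716); (2430,2916)]%Z.

Definition coord (i : nat) : Z * Z := nth (0, 0)%Z coords i.

Definition vertices : seq nat := iota 0 11.

Lemma E_sym : symmetric E.
Proof. by move=> u v; rewrite /E /ord_rel /adj orbC. Qed.

Lemma E_irr : irreflexive E.
Proof.
have check : all (fun u => ~~ adj u u) vertices by vm_compute.
by move=> u; apply/negbTE/(forall_ord_iota check).
Qed.

Lemma coord_inj : injective (fun u : 'I_11 => coord u).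
Proof.
have check : all (fun u => all (fun v => (u == v) || (coord u != coord v)) vertices) vertices.
  by vm_compute.
move=> u v eq_uv; have /orP[/eqP/val_inj // | ] := forall_ord_iota (forall_ord_iota check u) v.
by rewrite eq_uv eqxx.
Qed.

Lemma E_edges_avoid_vertices (u v w : 'I_11) : E u v ->
  [|| w == u, w == v | crossZ (coord u) (coord v) (coord w) != 0%Z].
Proof.
have check : all (fun u => all (fun v => all (fun w => adj u v ==>
  [|| w == u, w == v | crossZ (coord u) (coord v) (coord w) != 0%Z]) vertices) vertices) vertices.
  by vm_compute.
exact/implyP/(forall_ord_iota (forall_ord_iota (forall_ord_iota check u) v) w).
Qed.

Lemma E_edges_separated (u v u' v' : 'I_11) : E u v -> E u' v' ->
  [|| (u == u') && (v == v'), (u == v') && (v == u'),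
      off_line (coord u) (coord v) (coord u') (coord v')
    | off_line (coord u') (coord v') (coord u) (coord v)].
Proof.
have check : all (fun u => all (fun v => all (fun u' => all (fun v' => adj u v ==> adj u' v' ==>
  [|| (u == u') && (v == v'), (u == v') && (v == u'),
      off_line (coord u) (coord v) (coord u') (coord v')
    | off_line (coord u') (coord v') (coord u) (coord v)]) vertices) vertices) vertices) vertices.
  by vm_compute.
move=> e_uv e_u'v'.
move: (forall_ord_iota (forall_ord_iota (forall_ord_iota (forall_ord_iota check u) v) u') v').
by move=> /implyP/(_ e_uv)/implyP/(_ e_u'v').
Qed.

Definition short_paths : seq (seq nat) := paths_of_size 10 adj 2 ++ paths_of_size 10 adj 4.

Lemma short_paths_search : search 6 short_paths 11 0 [::].
Proof. by vm_compute. Qed.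

Theorem theorem3 :
  exists (n : nat) (e : rel 'I_n),
    simple_graph e /\ planar e /\
    forall c : 'I_n -> nat, nonrep_colouring e c -> 7 <= num_colours c.
Proof.
exists 11, E; split; first by split; [exact: E_sym | exact: E_irr].
split; first exact: straight_line_planar E_irr coord_inj E_edges_avoid_vertices E_edges_separated.
apply: nonrep_colouring_search_bound short_paths_search.
by move=> p; rewrite mem_cat => /orP[] /mem_paths_of_size.
Qed.
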